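(* Let $\mu$ be a probability measure on $(0,\infty)$, and for real $p$ let $\mu_p:=\int_{(0,\infty)}x^{p-2}\,\mu(\mathrm{d}x)\in(0,\infty]$. Define $L_\mu\colon(0,\infty)\to\mathbb{R}$ by $L_\mu(d):=\int_{(0,\infty)}\min\!\big(1,\tfrac{d}{x}\big)\,\mu(\mathrm{d}x)$. Fix $c\in(0,1)$. Then the equation $L_\mu(d)=c$ has a unique root $d\in(0,\infty)$; denote it by $\delta=\delta_\mu:=L_\mu^{-1}(c)$. If $\mu_3<\infty$, then $$\delta\le\delta_*:=\begin{cases} c\,\mu_3 & \text{if } 0<c\le\tfrac12,\\[4pt] \dfrac{\mu_3-(2c-1)^2/\mu_1}{4(1-c)} & \text{if } \tfrac12\le c<1.\end{cases}$$
   Context: Here $\mu_1=\int_{(0,\infty)}x^{-1}\,\mu(\mathrm{d}x)$ and $\mu_3=\int_{(0,\infty)}x\,\mu(\mathrm{d}x)$; if $\mu_1=\infty$, the term $(2c-1)^2/\mu_1$ is interpreted as $0$. The two formulas for $\delta_*$ agree at $c=\tfrac12$ (both equal $\mu_3/2$). *)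

From HB Require Import structures.
From mathcomp Require Import all_boot all_order all_algebra.
From mathcomp Require Import all_classical all_reals all_analysis.
Set Implicit Arguments. Unset Strict Implicit. Unset Printing Implicit Defensive.
Import Order.TTheory GRing.Theory Num.Theory.
Import numFieldNormedType.Exports.
Local Open Scope classical_set_scope.
Local Open Scope ring_scope.

Definition mu_moment (R : realType) (P : probability R R) (p : R) : \bar R :=
  (\int[P]_(x in `]0%R, +oo[) (x `^ (p - 2))%:E)%E.

Definition Lmu (R : realType) (P : probability R R) (d : R) : \bar R :=
  (\int[P]_(x in `]0%R, +oo[) (Num.min 1 (d / x))%:E)%E.

(* delta_*; the term (2c-1)^2/mu_1 is read as 0 when mu_1 = +oo. *)
Definition delta_star (R : realType) (P : probability R R) (c : R) : R :=
  let m3 := fine (mu_moment P 3) in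
  let t := match mu_moment P 1 with
           | r%:E => (2 * c - 1) ^+ 2 / r
           | _ => 0
           end in
  if c <= 2^-1 then c * m3 else (m3 - t) / (4 * (1 - c)).

From HB Require Import structures.
From mathcomp Require Import all_boot all_order all_algebra.
From mathcomp Require Import all_classical all_reals all_analysis.
From mathcomp Require Import ring lra measurable_realfun.
Import Order.TTheory GRing.Theory Num.Theory.
Import numFieldNormedType.Exports.
Local Open Scope classical_set_scope.
Local Open Scope ring_scope.

(* L(d) is nondecreasing, continuous for d > 0, close to 0 for small d and
   close to 1 for large d, so L(d) = c has a root; strict monotonicity of L
   wherever L < 1 makes it unique.  For the bound, for all d, l and x > 0,
     4d + 4l min(1, d/x) <= x + 4d min(1, d/x) + 2l + l^2/x,
   which is (x - l)^2/x >= 0 when d <= x and (x - 2d + l)^2/x >= 0 otherwise.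
   Integrating against mu (with l >= 0, so that all terms are nonnegative)
   and using L(d) = c gives
     4d(1 - c) <= mu_3 - 2l(2c - 1) + l^2 mu_1,
   and l = (2c - 1)/mu_1 is the optimal choice when c >= 1/2.  For c <= 1/2 the
   same argument with 2cd <= c^2 x + d min(1, d/x) gives d <= c mu_3. *)

Lemma lipschitz_continuous (R : realFieldType) (h : R -> R) (k : R) : 0 < k ->
  (forall a b, `|h a - h b| <= k * `|a - b|) -> continuous h.
Proof.
move=> k0 hk x; apply/cvgrPdist_lt => e e0.
exists (e / k) => [|y /= xy]; first by rewrite /= divr_gt0.
by rewrite (le_lt_trans (hk x y)) // mulrC -ltr_pdivlMr.
Qed.

Lemma ge0_integral_lincomb d (T : measurableType d) (R : realType)
    (mu : {measure set T -> \bar R}) (D : set T) (a b : R) (f h : T -> R) :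
  measurable D -> measurable_fun D f -> measurable_fun D h ->
  (forall x, D x -> 0 <= f x) -> (forall x, D x -> 0 <= h x) ->
  0 <= a -> 0 <= b ->
  (\int[mu]_(x in D) (a * f x + b * h x)%:E =
   a%:E * \int[mu]_(x in D) (f x)%:E + b%:E * \int[mu]_(x in D) (h x)%:E)%E.
Proof.
move=> mD mf mh f0 h0 a0 b0.
under eq_integral do rewrite EFinD !EFinM.
rewrite ge0_integralD //; first last.
- by apply: measurable_funeM; apply: measurableT_comp.
- by move=> x Dx; rewrite lee_fin mulr_ge0 ?h0.
- by apply: measurable_funeM; apply: measurableT_comp.
- by move=> x Dx; rewrite lee_fin mulr_ge0 ?f0.
by rewrite !ge0_integralZl_EFin //; apply: measurableT_comp.
Qed.

Lemma sqr_div_mulr (F : fieldType) (a r : F) : (a / r) ^+ 2 * r = a ^+ 2 / r.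
Proof.
have [->|r0] := eqVneq r 0; first by rewrite !invr0 !mulr0.
by field.
Qed.

Section truncated_ratio.
Variable R : realFieldType.
Implicit Types d x : R.

Lemma min1_div_ge0 d x : 0 <= d -> 0 < x -> 0 <= Num.min 1 (d / x).
Proof. by move=> d0 x0; rewrite le_min ler01 divr_ge0 // ltW. Qed.

Lemma min1_div_le d1 d2 x : d1 <= d2 -> 0 < x ->
  Num.min 1 (d1 / x) <= Num.min 1 (d2 / x).
Proof.
move=> d12 x0; rewrite le_min ge_min lexx /= ge_min.
by rewrite ler_wpM2r ?orbT // invr_ge0 ltW.
Qed.

Lemma min1_div_le_scale d1 d2 x : 0 < d1 -> d1 <= d2 -> 0 < x ->
  Num.min 1 (d2 / x) <= d2 / d1 * Num.min 1 (d1 / x).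
Proof.
move=> d1_gt0 d12 x0.
have ratioE : d2 / d1 * (d1 / x) = d2 / x by field; rewrite ?gt_eqF.
have ratio_ge1 : 1 <= d2 / d1 by rewrite ler_pdivlMr // mul1r.
rewrite [Num.min 1 (d1 / x)]minEle; case: ifP => _.
  by rewrite mulr1 ge_min ratio_ge1.
by rewrite ratioE ge_min lexx orbT.
Qed.

Lemma indic_itv0 b x : 0 < x ->
  \1_(`]0, b]%classic) x = (if x <= b then 1 else 0 : R).
Proof. by move=> x0; rewrite indicE mem_setE in_itv /= x0; case: (x <= b). Qed.

Lemma min1_div_gap d1 d2 b x : 0 < b -> d1 <= d2 -> 0 < x ->
  Num.min 1 (d1 / x) + (d2 - d1) / b * \1_(`]0, b]%classic) x <=
  Num.min 1 (d2 / x) + (d2 - d1) / b * \1_(`]0, d2]%classic) x.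
Proof.
move=> b0 d12 x0; rewrite !indic_itv0 //.
have [xd2|d2x] := leP x d2.
  rewrite mulr1 lerD ?min1_div_le //.
  by case: (x <= b); rewrite ?mulr1 ?mulr0 // divr_ge0 // ?subr_ge0 // ltW.
rewrite mulr0 addr0.
have [xb|_] := leP x b; last by rewrite mulr0 addr0 min1_div_le // ltW.
have d1x : d1 / x <= 1 by rewrite ler_pdivrMr // mul1r (le_trans d12) // ltW.
have d2x1 : d2 / x <= 1 by rewrite ler_pdivrMr // mul1r ltW.
rewrite !min_r // mulr1.
have : (d2 - d1) / b <= (d2 - d1) / x by rewrite ler_wpM2l ?subr_ge0 // lef_pV2 ?posrE.
by rewrite mulrBl; lra.
Qed.

Lemma min1_div_amgm d c x : 0 <= d -> 2 * c <= 1 -> 0 < x ->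
  2 * c * d <= c ^+ 2 * x + d * Num.min 1 (d / x).
Proof.
move=> d0 c2 x0; have x_neq0 : x != 0 by rewrite gt_eqF.
rewrite minEle; case: ifP => [_|_].
  have : 0 <= c ^+ 2 * x by rewrite mulr_ge0 ?sqr_ge0 // ltW.
  nra.
have sqE : x * (c - d / x) ^+ 2 = c ^+ 2 * x - 2 * c * d + d * (d / x) by field.
have : 0 <= x * (c - d / x) ^+ 2 by rewrite mulr_ge0 ?sqr_ge0 // ltW.
by rewrite sqE; lra.
Qed.

Lemma min1_div_amgm_shift d l x : 0 < x ->
  4 * d * 1 + 4 * l * Num.min 1 (d / x) <=
  (1 * x + 4 * d * Num.min 1 (d / x)) + (2 * l * 1 + l ^+ 2 * x^-1).
Proof.
move=> x0; have x_neq0 : x != 0 by rewrite gt_eqF.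
have x_inv_ge0 : 0 <= x^-1 by rewrite invr_ge0 ltW.
rewrite minEle; case: ifP => [_|_].
  have sqE : x^-1 * (x - l) ^+ 2 = x + l ^+ 2 * x^-1 - 2 * l by field.
  have : 0 <= x^-1 * (x - l) ^+ 2 by rewrite mulr_ge0 ?sqr_ge0.
  by rewrite sqE; lra.
have sqE : x^-1 * (x - 2 * d + l) ^+ 2 =
  x + 4 * d * (d / x) + l ^+ 2 * x^-1 - 4 * d + 2 * l - 4 * l * (d / x) by field.
have : 0 <= x^-1 * (x - 2 * d + l) ^+ 2 by rewrite mulr_ge0 ?sqr_ge0.
by rewrite sqE; lra.
Qed.

End truncated_ratio.

Section Lmu_properties.
Context {R : realType} {P : probability R R}.
Hypothesis hP : P `]0%R, +oo[%classic = 1%E.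

Implicit Types a b c d e k t : R.

Local Notation D := (`]0%R, +oo[%classic : set R).

Let measurable_D : measurable D. Proof. exact: measurable_itv. Qed.

Let D_gt0 x : D x -> 0 < x.
Proof. by rewrite /= in_itv /= andbT. Qed.

Lemma measurable_min1_div d : measurable_fun D (fun x => Num.min 1 (d / x)).
Proof.
apply: open_continuous_measurable_fun; first exact: itv_open_ends_open.
move=> x /set_mem/D_gt0 x0.
apply: (@continuous_min R R (fun=> 1) (fun x => d / x)); first exact: cst_continuous.
by apply: continuousM; [exact: cst_continuous | apply: inv_continuous; rewrite gt_eqF].
Qed.

Lemma measurable_inv_D : measurable_fun D (fun x : R => x^-1).
Proof.
apply: open_continuous_measurable_fun; first exact: itv_open_ends_open.
by move=> x /set_mem/D_gt0 x0; apply: inv_continuous; rewrite gt_eqF.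
Qed.

Lemma measurable_indic_itv0 t :
  measurable_fun D (\1_(`]0%R, t]%classic) : R -> R).
Proof. by apply: measurable_indic; exact: measurable_itv. Qed.

#[local] Hint Resolve measurable_min1_div measurable_inv_D measurable_indic_itv0 : core.

Lemma integral_cst_D k : (\int[P]_(x in D) k%:E = k%:E)%E.
Proof. by rewrite integral_cst //= hP mule1. Qed.

Lemma integral_indic_itv0 t :
  (\int[P]_(x in D) (\1_(`]0%R, t]%classic) x)%:E = P `]0%R, t]%classic)%E.
Proof.
rewrite integral_indic //; congr (P _).
by apply/setIidl => x /=; rewrite !in_itv /= andbT => /andP[].
Qed.

Lemma Lmu_ge0 {d} : 0 <= d -> (0 <= Lmu P d)%E.
Proof.
by move=> d0; apply: integral_ge0 => x /D_gt0 x0; rewrite lee_fin min1_div_ge0.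
Qed.

Lemma Lmu_le1 {d} : 0 <= d -> (Lmu P d <= 1)%E.
Proof.
move=> d0; rewrite -[leRHS](integral_cst_D 1).
apply: ge0_le_integral => //.
- by move=> x /D_gt0 x0; rewrite lee_fin min1_div_ge0.
- by apply/measurable_EFinP.
- by move=> x _; rewrite lee_fin ge_min lexx.
Qed.

Lemma LmuE {d} : 0 <= d -> Lmu P d = (fine (Lmu P d))%:E.
Proof.
move=> d0; rewrite fineK // ge0_fin_numE ?Lmu_ge0 //.
by rewrite (le_lt_trans (Lmu_le1 d0)) ?ltry.
Qed.

Lemma Lmu_le {d1 d2} : 0 <= d1 -> d1 <= d2 -> (Lmu P d1 <= Lmu P d2)%E.
Proof.
move=> d10 d12; apply: ge0_le_integral => //.
- by move=> x /D_gt0 x0; rewrite lee_fin min1_div_ge0.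
- by apply/measurable_EFinP.
- by apply/measurable_EFinP.
- by move=> x /D_gt0 x0; rewrite lee_fin min1_div_le.
Qed.

Lemma Lmu_le_scale {d1 d2} : 0 < d1 -> d1 <= d2 ->
  (Lmu P d2 <= (d2 / d1)%:E * Lmu P d1)%E.
Proof.
move=> d10 d12; have d20 := lt_le_trans d10 d12.
rewrite -ge0_integralZl_EFin //.
- apply: ge0_le_integral => //.
  + by move=> x /D_gt0 x0; rewrite lee_fin min1_div_ge0 // ltW.
  + by apply/measurable_EFinP.
  + by apply/measurable_funeM/measurable_EFinP.
  + by move=> x /D_gt0 x0; rewrite -EFinM lee_fin min1_div_le_scale.
- by move=> x /D_gt0 x0; rewrite lee_fin min1_div_ge0 // ltW.
- by apply/measurable_EFinP.
- by rewrite divr_ge0 // ltW.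
Qed.

Lemma measure_itv0_le_Lmu {d} : 0 <= d -> (P `]0%R, d]%classic <= Lmu P d)%E.
Proof.
move=> d0; rewrite -(integral_indic_itv0 d); apply: ge0_le_integral => //.
- by apply/measurable_EFinP.
- by apply/measurable_EFinP.
move=> x /D_gt0 x0; rewrite lee_fin indic_itv0 //.
have [xd|_] := leP x d; last by rewrite min1_div_ge0.
by rewrite le_min lexx ler_pdivlMr // mul1r.
Qed.

Lemma Lmu_le_measure_itv0 {d t} : 0 <= d -> 0 < t ->
  (Lmu P d <= P `]0%R, t]%classic + (d / t)%:E)%E.
Proof.
move=> d0 t0.
have -> : (P `]0%R, t]%classic + (d / t)%:E =
    \int[P]_(x in D) (1 * \1_(`]0%R, t]%classic) x + d / t * 1)%:E)%E.
  rewrite ge0_integral_lincomb //.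
  - by rewrite integral_indic_itv0 integral_cst_D mul1e mule1.
  - by rewrite divr_ge0 // ltW.
apply: ge0_le_integral => //.
- by move=> x /D_gt0 x0; rewrite lee_fin min1_div_ge0.
- by apply/measurable_EFinP.
- by apply/measurable_EFinP; apply: measurable_funD; apply: measurable_funM.
move=> x /D_gt0 x0; rewrite lee_fin indic_itv0 // mul1r mulr1.
have [_|tx] := leP x t; first by rewrite /= ge_min lerDl divr_ge0 // ltW.
rewrite /= add0r ge_min; apply/orP; right.
by rewrite ler_wpM2l // lef_pV2 ?posrE // ltW.
Qed.

Lemma probability_itv0_lt e : 0 < e ->
  exists2 t, 0 < t & (P `]0%R, t]%classic < e%:E)%E.
Proof.
move=> e0; pose F n := (`]0%R, n.+1%:R^-1]%classic : set R).
have mF n : measurable (F n) by exact: measurable_itv.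
have F_nonincr : nonincreasing_seq F.
  move=> n m nm; apply/subsetPset; apply: subset_itvl.
  by rewrite bnd_simp lef_pV2 ?posrE // ler_nat.
have F_cap : \bigcap_n F n = set0.
  rewrite -subset0 => x Fx.
  have := Fx 0%N I; rewrite /F /= in_itv /= => /andP[x0 _].
  have := Fx (Num.truncn x^-1) I; rewrite /F /= in_itv /= x0 /= -[x in x <= _]invrK.
  by rewrite lef_pV2 ?posrE ?invr_gt0 // leNgt truncnS_gt.
have := nonincreasing_cvg_mu (le_lt_trans (probability_le1 P (mF 0%N)) (ltry 1)) mF.
rewrite F_cap measure0 => /(_ measurable0 F_nonincr).
move=> /(_ [set y | (y < e%:E)%E]) [|N _ /(_ N (leqnn N)) PF].
  by apply: open_nbhs_nbhs; split; [exact: open_ereal_lt_ereal | rewrite /= lte_fin].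
by exists N.+1%:R^-1; rewrite ?invr_gt0.
Qed.

Lemma probability_itv0_gt {c} : c < 1 ->
  exists2 t, 0 < t & (c%:E < P `]0%R, t]%classic)%E.
Proof.
move=> c1; pose F n := (`]0%R, n.+1%:R]%classic : set R).
have mF n : measurable (F n) by exact: measurable_itv.
have F_nondecr : nondecreasing_seq F.
  by move=> n m nm; apply/subsetPset; apply: subset_itvl; rewrite bnd_simp ler_nat.
have F_cup : \bigcup_n F n = D.
  apply/seteqP; split => x /=.
    by case=> n _; rewrite /F /= !in_itv /= andbT => /andP[].
  rewrite in_itv /= andbT => x0; exists (Num.truncn x) => //.
  by rewrite /F /= in_itv /= x0 ltW // truncnS_gt.
have := nondecreasing_cvg_mu (mu := P) mF _ F_nondecr; rewrite F_cup /= hP.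
move=> /(_ measurable_D) /(_ [set y | (c%:E < y)%E]) [|N _ /(_ N (leqnn N)) PF].
  by apply: open_nbhs_nbhs; split; [exact: open_ereal_gt_ereal | rewrite /= lte_fin].
by exists N.+1%:R.
Qed.

Lemma Lmu_lt {d1 d2} : 0 < d1 -> d1 < d2 -> (Lmu P d2 < 1)%E ->
  (Lmu P d1 < Lmu P d2)%E.
Proof.
move=> d10 d12 L2_lt1; have d20 := lt_trans d10 d12.
(* Since P(0, d2] <= L(d2) < 1 there is b with P(0, b] > P(0, d2]; integrating
   min1_div_gap turns this excess mass into a gain of L(d2) over L(d1). *)
set p := P `]0%R, d2]%classic.
have p_lt1 : fine p < 1.
  rewrite -lte_fin fineK ?fin_num_measure //.
  exact: le_lt_trans (measure_itv0_le_Lmu (ltW d20)) L2_lt1.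
have [b b0 p_lt] := probability_itv0_gt p_lt1.
set k := (d2 - d1) / b; have k0 : 0 < k by rewrite divr_gt0 ?subr_gt0.
have k_ge0 := ltW k0.
have gap :
    (\int[P]_(x in D) (1 * Num.min 1 (d1 / x) + k * \1_(`]0%R, b]%classic) x)%:E <=
     \int[P]_(x in D) (1 * Num.min 1 (d2 / x) + k * \1_(`]0%R, d2]%classic) x)%:E)%E.
  apply: ge0_le_integral => //.
  - move=> x /D_gt0 x0.
    by rewrite lee_fin mul1r addr_ge0 ?min1_div_ge0 ?(mulr_ge0 k_ge0) // ltW.
  - by apply/measurable_EFinP; apply: measurable_funD; apply: measurable_funM.
  - by apply/measurable_EFinP; apply: measurable_funD; apply: measurable_funM.
  - by move=> x /D_gt0 x0; rewrite lee_fin !mul1r min1_div_gap // ltW.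
move: gap; rewrite !ge0_integral_lincomb //; first last.
- by move=> x /D_gt0 x0; rewrite min1_div_ge0 // ltW.
- by move=> x /D_gt0 x0; rewrite min1_div_ge0 // ltW.
rewrite !mul1e !integral_indic_itv0 -/(Lmu P d1) -/(Lmu P d2) -/p.
have Pb_fin : P `]0%R, b]%classic \is a fin_num by rewrite fin_num_measure.
have p_fin : p \is a fin_num by rewrite fin_num_measure.
move: p_lt; rewrite -(fineK Pb_fin) -(fineK p_fin) (LmuE (ltW d10)) (LmuE (ltW d20)).
rewrite -!EFinM -!EFinD lee_fin !lte_fin => p_lt gap.
have : k * fine p < k * fine (P `]0%R, b]%classic) by rewrite ltr_pM2l.
lra.
Qed.

Lemma Lmu_root_unique {c d1 d2} : c < 1 -> 0 < d1 -> 0 < d2 ->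
  Lmu P d1 = c%:E -> Lmu P d2 = c%:E -> d1 = d2.
Proof.
move=> c1 d10 d20 L1 L2; case: (ltgtP d1 d2) => // d12.
  by have := Lmu_lt d10 d12; rewrite L1 L2 !lte_fin ltxx => /(_ c1).
by have := Lmu_lt d20 d12; rewrite L1 L2 !lte_fin ltxx => /(_ c1).
Qed.

Lemma Lmu_lipschitz {a b} : 0 < a -> a <= b ->
  0 <= fine (Lmu P b) - fine (Lmu P a) <= (b - a) / a.
Proof.
move=> a0 ab; have b0 := lt_le_trans a0 ab.
have := Lmu_le (ltW a0) ab; have := Lmu_le_scale a0 ab; have := Lmu_le1 (ltW a0).
rewrite (LmuE (ltW a0)) (LmuE (ltW b0)) -EFinM !lee_fin.
set La := fine (Lmu P a); set Lb := fine (Lmu P b) => La_le1 Lb_le La_le_Lb.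
rewrite subr_ge0 La_le_Lb /=.
have scaleE : b / a * La - La = (b - a) / a * La by field; rewrite gt_eqF.
have : (b - a) / a * La <= (b - a) / a by rewrite ler_piMr // divr_ge0 ?subr_ge0 // ltW.
lra.
Qed.

(* Clamping at d0 > 0 makes L globally Lipschitz, so IVT applies to it. *)
Lemma continuous_Lmu_max d0 : 0 < d0 ->
  continuous (fun d => fine (Lmu P (Num.max d d0))).
Proof.
move=> d00; apply: (@lipschitz_continuous _ _ d0^-1); first by rewrite invr_gt0.
move=> x y; wlog xy : x y / Num.max y d0 <= Num.max x d0.
  move=> wlog_xy; have [|/ltW] := leP (Num.max y d0) (Num.max x d0); first exact: wlog_xy.
  by move=> /wlog_xy; rewrite distrC [`|y - x|]distrC.
have d0_le : d0 <= Num.max y d0 by rewrite le_max lexx orbT.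
have /andP[Lge0 Lle] := Lmu_lipschitz (lt_le_trans d00 d0_le) xy.
rewrite ger0_norm // (le_trans Lle) // [leRHS]mulrC.
have max_dist : Num.max x d0 - Num.max y d0 <= `|x - y|.
  have := ler_norm (x - y); have := normr_ge0 (x - y).
  by rewrite !maxEle; case: (leP x d0); case: (leP y d0) => /= *; lra.
apply: ler_pM => //; first by rewrite subr_ge0.
  by rewrite invr_ge0 (le_trans (ltW d00)).
by rewrite lef_pV2 ?posrE // (lt_le_trans d00).
Qed.

Lemma Lmu_root_exists {c} : 0 < c -> c < 1 -> exists2 d, 0 < d & Lmu P d = c%:E.
Proof.
move=> c0 c1.
have [t0 t00 Pt0] := probability_itv0_lt (c / 2) ltac:(lra).
pose d0 := c / 2 * t0; have d00 : 0 < d0 by rewrite mulr_gt0 // divr_gt0.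
have [t1 t10 Pt1] := probability_itv0_gt c1.
have Pfin t : P `]0%R, t]%classic = (fine (P `]0%R, t]%classic))%:E.
  by rewrite fineK // fin_num_measure.
have Ld0_lt : fine (Lmu P d0) < c.
  have := Lmu_le_measure_itv0 (ltW d00) t00; move: Pt0.
  rewrite /d0 mulfK ?gt_eqF // -/d0 (LmuE (ltW d00)) Pfin lte_fin -EFinD lee_fin.
  lra.
have Lt1_gt : c < fine (Lmu P t1).
  have := measure_itv0_le_Lmu (ltW t10); move: Pt1.
  rewrite (LmuE (ltW t10)) Pfin lte_fin lee_fin; lra.
have d0t1 : d0 <= t1.
  have [//|/ltW t1d0] := leP d0 t1; have := Lmu_le (ltW t10) t1d0.
  by rewrite (LmuE (ltW t10)) (LmuE (ltW d00)) lee_fin; lra.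
pose f d := fine (Lmu P (Num.max d d0)).
have [d] : exists2 d, d \in `[d0, t1] & f d = c.
  apply: IVT => //; first by move=> x; apply/continuous_subspaceT/continuous_Lmu_max.
  by rewrite /f maxxx max_l // ge_min le_max (ltW Ld0_lt) (ltW Lt1_gt) orbT.
rewrite in_itv /= => /andP[d0d _] fdc.
exists d; first exact: lt_le_trans d0d.
by rewrite (LmuE (le_trans (ltW d00) d0d)) -fdc /f max_l.
Qed.

Lemma mu_moment_ge0 p : (0 <= mu_moment P p)%E.
Proof. by apply: integral_ge0 => x _; rewrite lee_fin powR_ge0. Qed.

Lemma mu_moment3E : mu_moment P 3 = (\int[P]_(x in D) x%:E)%E.
Proof.
apply: eq_integral => x /set_mem/D_gt0 x0.
by rewrite (_ : 3 - 2 = 1 :> R) ?powRr1 ?ltW //; lra.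
Qed.

Lemma mu_moment1E : mu_moment P 1 = (\int[P]_(x in D) (x^-1)%:E)%E.
Proof.
apply: eq_integral => x /set_mem/D_gt0 x0.
by rewrite (_ : 1 - 2 = - 1 :> R) ?powRN ?powRr1 ?ltW //; lra.
Qed.

Lemma mu_moment3_finE : (mu_moment P 3 < +oo)%E ->
  mu_moment P 3 = (fine (mu_moment P 3))%:E.
Proof. by move=> m3_fin; rewrite fineK // ge0_fin_numE ?mu_moment_ge0. Qed.

Lemma Lmu_root_le_small c d : 2 * c <= 1 -> 0 < c -> 0 < d -> Lmu P d = c%:E ->
  (mu_moment P 3 < +oo)%E -> d <= c * fine (mu_moment P 3).
Proof.
move=> c2 c0 d0 Ldc m3_fin; have d_ge0 := ltW d0.
have : (\int[P]_(x in D) (2 * c * d)%:E <=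
        \int[P]_(x in D) (c ^+ 2 * x + d * Num.min 1 (d / x))%:E)%E.
  apply: ge0_le_integral => //.
  - by move=> x _; rewrite lee_fin !mulr_ge0 ?(ltW c0).
  - by apply/measurable_EFinP; apply: measurable_funD; apply: measurable_funM.
  - by move=> x /D_gt0 x0; rewrite lee_fin min1_div_amgm.
rewrite integral_cst_D ge0_integral_lincomb ?sqr_ge0 //; first last.
- by move=> x /D_gt0 x0; rewrite min1_div_ge0.
- by move=> x /D_gt0 x0; exact: ltW.
rewrite -mu_moment3E -/(Lmu P d) Ldc (mu_moment3_finE m3_fin) -!EFinM -EFinD lee_fin.
nra.
Qed.

Lemma Lmu_root_quadratic_bound {c d} l : 0 < d -> Lmu P d = c%:E -> 0 <= l ->
  (mu_moment P 3 < +oo)%E ->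
  ((4 * d + 4 * l * c)%:E <=
   (fine (mu_moment P 3) + 4 * d * c + 2 * l)%:E + (l ^+ 2)%:E * mu_moment P 1)%E.
Proof.
move=> d0 Ldc l0 m3_fin; have d_ge0 := ltW d0.
have g_ge0 x : D x -> 0 <= Num.min 1 (d / x) by move=> /D_gt0; exact: min1_div_ge0.
have x_ge0 x : D x -> 0 <= x by move=> /D_gt0 /ltW.
have xV_ge0 x : D x -> 0 <= x^-1 by move=> /D_gt0 /ltW; rewrite invr_ge0.
have : (\int[P]_(x in D) (4 * d * 1 + 4 * l * Num.min 1 (d / x))%:E <=
        \int[P]_(x in D) ((1 * x + 4 * d * Num.min 1 (d / x))%:E +
                          (2 * l * 1 + l ^+ 2 * x^-1)%:E))%E.
  apply: ge0_le_integral => //.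
  - by move=> x Dx; rewrite lee_fin addr_ge0 ?mulr_ge0 ?g_ge0.
  - by apply/measurable_EFinP; apply: measurable_funD; apply: measurable_funM.
  - by apply: emeasurable_funD; apply/measurable_EFinP; apply: measurable_funD;
      apply: measurable_funM.
  - move=> x /D_gt0 x0; rewrite -EFinD lee_fin.
    exact: min1_div_amgm_shift.
rewrite ge0_integralD //; first last.
- by apply/measurable_EFinP; apply: measurable_funD; apply: measurable_funM.
- by move=> x Dx; rewrite lee_fin addr_ge0 ?mulr_ge0 ?(xV_ge0 _ Dx).
- by apply/measurable_EFinP; apply: measurable_funD; apply: measurable_funM.
- by move=> x Dx; rewrite lee_fin addr_ge0 ?mulr_ge0 ?(x_ge0 _ Dx) ?(g_ge0 _ Dx).
rewrite !ge0_integral_lincomb ?sqr_ge0 ?mulr_ge0 //.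
rewrite !integral_cst_D -mu_moment3E -mu_moment1E -/(Lmu P d) Ldc.
by rewrite {1}(mu_moment3_finE m3_fin) mul1e !mule1 -!EFinM -!EFinD addeA -!EFinD.
Qed.

Lemma Lmu_root_le_large c d : 1 <= 2 * c -> c < 1 -> 0 < d -> Lmu P d = c%:E ->
  (mu_moment P 3 < +oo)%E ->
  d <= (fine (mu_moment P 3) -
        match mu_moment P 1 with r%:E => (2 * c - 1) ^+ 2 / r | _ => 0 end) /
       (4 * (1 - c)).
Proof.
move=> c2 c1 d0 Ldc m3_fin; rewrite ler_pdivlMr; last by lra.
have bound l := Lmu_root_quadratic_bound l d0 Ldc^~ m3_fin.
case E1 : (mu_moment P 1) (mu_moment_ge0 1) => [r| |] // r_ge0.
  (* the optimal l; for r = 0 it is 0, matching the junk value of delta_star *)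
  pose l := (2 * c - 1) / r.
  have := bound l; rewrite E1 -EFinM -EFinD lee_fin.
  have l_ge0 : 0 <= l by rewrite divr_ge0 // subr_ge0.
  have lr : l ^+ 2 * r = (2 * c - 1) ^+ 2 / r by rewrite sqr_div_mulr.
  have lc : l * (2 * c - 1) = (2 * c - 1) ^+ 2 / r by rewrite mulrAC -expr2.
  move=> /(_ l_ge0); lra.
by have := bound 0; rewrite E1 expr0n mul0e adde0 lee_fin mulr0 => /(_ (lexx 0)); lra.
Qed.

End Lmu_properties.

Theorem theorem1 (R : realType) (P : probability R R)
  (hP : P `]0%R, +oo[%classic = 1%E) (c : R) (hc0 : 0 < c) (hc1 : c < 1) :
  (exists! d : R, 0 < d /\ Lmu P d = c%:E) /\
  (forall d : R, 0 < d -> Lmu P d = c%:E ->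
     (mu_moment P 3 < +oo)%E -> d <= delta_star P c).
Proof.
split.
  have [d d0 Ldc] := Lmu_root_exists hP hc0 hc1.
  by exists d; split => // d' [d'0 Ld'c]; exact: (Lmu_root_unique hP hc1 d0 d'0).
move=> d d0 Ldc m3_fin; rewrite /delta_star.
case: ifP => [c_le|/negbT]; first by apply: Lmu_root_le_small => //; lra.
by rewrite -ltNge => c_gt; apply: Lmu_root_le_large => //; lra.
Qed.
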